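(* For every $p\in(1/2,1)$ and every $V\in\{G,B\}$ there exists $\underline{\epsilon}>0$ (depending on $V$ and $p$) such that $\mathbb{P}_{Y\text{-cas}}(\epsilon)<\mathbb{P}_{Y\text{-cas}}(0)$ for all $\epsilon\in(0,\underline{\epsilon})$.
   Context: Observational learning model: an item has true value $V\in\{G,B\}$; agents arrive sequentially, each receives a private binary signal equal to the ''correct'' signal with probability $p\in(1/2,1)$, and each agent is independently fake with probability $\epsilon\in[0,1)$ (a fake agent's recorded action is always $Y$ = buy). Define $a=p+(1-p)\epsilon$, $b=p(1-\epsilon)$, $\alpha=p/(1-p)$ and $\eta=\eta(\epsilon)=\log\big(a/(1-b)\big)/\log\alpha\in(0,1]$. Given $V$, let $p_f=a$ if $V=G$ and $p_f=1-b$ if $V=B$. Before any cascade, the agents' sufficient statistic $h$ evolves as the following random walk: $h_0=0$ and, independently at each step, $h$ increases by $\eta$ with probability $p_f$ (an observed $Y$) or decreases by $1$ with probability $1-p_f$ (an observed $N$); the walk is stopped the first time it leaves $[-1,1]$. Leaving above $1$ is a $Y$ cascade, leaving below $-1$ is an $N$ cascade. $\mathbb{P}_{Y\text{-cas}}(\epsilon)$ denotes the probability (given $V$) that the walk leaves $[-1,1]$ above $1$. (For $\epsilon=0$ one has $\eta=1$, so $\mathbb{P}_{Y\text{-cas}}(0)$ is the probability that the $\pm1$ walk from $0$ reaches $2$ before $-2$.) *)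

From Stdlib Require Import Reals Lra.
From Coquelicot Require Import Coquelicot.
Open Scope R_scope.

Inductive value := G | B.

Definition a_par (p eps : R) : R := p + (1 - p) * eps.
Definition b_par (p eps : R) : R := p * (1 - eps).
Definition alpha (p : R) : R := p / (1 - p).
Definition eta (p eps : R) : R :=
  ln (a_par p eps / (1 - b_par p eps)) / ln (alpha p).

(* probability of an observed Y given V *)
Definition p_f (p eps : R) (V : value) : R :=
  match V with G => a_par p eps | B => 1 - b_par p eps end.

Definition exit_or (k : R -> R) (x : R) : R :=
  if Rlt_dec 1 x then 1 else if Rlt_dec x (-1) then 0 else k x.

(* ycas_n p eps V n h = probability that the walk started at h (inside
   [-1,1]) leaves [-1,1] above 1 within at most n steps. *)
Fixpoint ycas_n (p eps : R) (V : value) (n : nat) (h : R) : R :=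
  match n with
  | O => 0
  | S m =>
      p_f p eps V * exit_or (ycas_n p eps V m) (h + eta p eps)
      + (1 - p_f p eps V) * exit_or (ycas_n p eps V m) (h - 1)
  end.

(* P_{Y-cas}(eps): probability (given V) that the walk from 0 ever leaves
   [-1,1] above 1; the limit of the nondecreasing bounded sequence above. *)
Definition P_Ycas (p eps : R) (V : value) : R :=
  real (Lim_seq (fun n => ycas_n p eps V n 0)).

(** For [eps > 0] the up-step [eta] lies in (0,1), so before a cascade the walk
    sits at 0, at -1, in (-1,0) or in (0,1].  With [q = p_f], the function equal
    to [y] on (0,1], [A] at 0, [q y] on (-1,0) and [q^2 y] at -1, where
    [y = q + (1-q) A] and [A = q y + (1-q) q^2 y], is a supersolution of the
    one-step recursion, so the Y-cascade probability is at most [A(q)].  For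
    [eps = 0] the walk is the simple +-1 walk and the probability equals
    [q^2 / (q^2 + (1-q)^2)], which strictly exceeds [A(q)].  As [p_f] is
    Lipschitz in [eps] and [A] is continuous, the strict inequality survives
    for small [eps]. *)

From Stdlib Require Import Reals Lra Lia.
From Coquelicot Require Import Coquelicot.
Open Scope R_scope.

Lemma continuous_lt_near (f : R -> R) (x c : R) :
  continuous f x -> f x < c ->
  exists d, 0 < d /\ forall y, Rabs (y - x) < d -> f y < c.
Proof.
  intros Hf Hlt.
  destruct (Hf _ (open_lt c (f x) Hlt)) as [d Hd].
  exists d; split; [apply cond_pos | intros y Hy; exact (Hd y Hy)].
Qed.

Lemma real_Lim_seq_le (u : nat -> R) (c : R) :
  (forall n, 0 <= u n <= c) -> real (Lim_seq u) <= c.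
Proof.
  intros Hu.
  assert (Hup : Rbar_le (Lim_seq u) (Lim_seq (fun _ => c)))
    by (apply Lim_seq_le_loc; exists O; intros; apply Hu).
  assert (Hlow : Rbar_le (Lim_seq (fun _ => 0)) (Lim_seq u))
    by (apply Lim_seq_le_loc; exists O; intros; apply Hu).
  rewrite Lim_seq_const in Hup, Hlow.
  pose proof (Hu O).
  destruct (Lim_seq u); simpl in *; lra.
Qed.

Lemma p_f_bounds (p eps : R) (V : value) :
  0 < p < 1 -> 0 <= eps < 1 -> 0 < p_f p eps V < 1.
Proof. intros; destruct V; simpl; unfold a_par, b_par; nra. Qed.

Lemma Rabs_p_f_sub_eps0 (p eps : R) (V : value) :
  0 <= p <= 1 -> 0 <= eps -> Rabs (p_f p eps V - p_f p 0 V) <= eps.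
Proof.
  intros Hp He.
  destruct V; simpl; unfold a_par, b_par;
    rewrite Rabs_right by nra; nra.
Qed.

Lemma ln_alpha_pos (p : R) : 1/2 < p < 1 -> 0 < ln (alpha p).
Proof.
  intros Hp. rewrite <- ln_1. apply ln_increasing; [lra|].
  unfold alpha. apply Rlt_div_r; lra.
Qed.

Lemma eta_eps0 (p : R) : 1/2 < p < 1 -> eta p 0 = 1.
Proof.
  intros Hp. pose proof (ln_alpha_pos p Hp).
  unfold eta, alpha, a_par, b_par in *.
  replace (p + (1 - p) * 0) with p by ring.
  replace (1 - p * (1 - 0)) with (1 - p) by ring.
  field. lra.
Qed.

Lemma a_par_div_bounds (p eps : R) : 1/2 < p < 1 -> 0 < eps < 1 ->
  1 < a_par p eps / (1 - b_par p eps) < alpha p.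
Proof.
  intros Hp He. unfold a_par, b_par, alpha.
  split; [apply Rlt_div_r; nra|].
  apply Rlt_0_minus.
  replace (p / (1 - p) - (p + (1 - p) * eps) / (1 - p * (1 - eps)))
    with (eps * (2 * p - 1) / ((1 - p) * (1 - p * (1 - eps)))) by (field; nra).
  apply Rdiv_lt_0_compat; apply Rmult_lt_0_compat; nra.
Qed.

Lemma eta_bounds (p eps : R) : 1/2 < p < 1 -> 0 < eps < 1 -> 0 < eta p eps < 1.
Proof.
  intros Hp He.
  destruct (a_par_div_bounds p eps Hp He) as [Hgt1 Hltal].
  pose proof (ln_alpha_pos p Hp).
  assert (0 < ln (a_par p eps / (1 - b_par p eps)))
    by (rewrite <- ln_1; apply ln_increasing; lra).
  assert (ln (a_par p eps / (1 - b_par p eps)) < ln (alpha p))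
    by (apply ln_increasing; lra).
  unfold eta. split; [apply Rdiv_lt_0_compat | apply Rlt_div_l]; lra.
Qed.

Definition walk_step (q e : R) (k : R -> R) (h : R) : R :=
  q * exit_or k (h + e) + (1 - q) * exit_or k (h - 1).

Lemma ycas_n_S (p eps : R) (V : value) (n : nat) :
  ycas_n p eps V (S n) = walk_step (p_f p eps V) (eta p eps) (ycas_n p eps V n).
Proof. reflexivity. Qed.

Lemma exit_or_le (k1 k2 : R -> R) (x : R) :
  (forall h, -1 <= h <= 1 -> k1 h <= k2 h) -> exit_or k1 x <= exit_or k2 x.
Proof.
  intros Hk. unfold exit_or.
  destruct Rlt_dec; [lra|]. destruct Rlt_dec; [lra|]. apply Hk; lra.
Qed.

Lemma exit_or_bounds (k : R -> R) (x : R) :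
  (forall h, 0 <= k h <= 1) -> 0 <= exit_or k x <= 1.
Proof. intros Hk. unfold exit_or. repeat destruct Rlt_dec; auto; lra. Qed.

Lemma walk_step_le (q e : R) (k1 k2 : R -> R) (h : R) : 0 <= q <= 1 ->
  (forall x, -1 <= x <= 1 -> k1 x <= k2 x) ->
  walk_step q e k1 h <= walk_step q e k2 h.
Proof.
  intros Hq Hk. unfold walk_step.
  apply Rplus_le_compat; apply Rmult_le_compat_l; try lra; apply exit_or_le, Hk.
Qed.

Lemma walk_step_bounds (q e : R) (k : R -> R) (h : R) : 0 <= q <= 1 ->
  (forall x, 0 <= k x <= 1) -> 0 <= walk_step q e k h <= 1.
Proof.
  intros Hq Hk. unfold walk_step.
  pose proof (exit_or_bounds k (h + e) Hk).
  pose proof (exit_or_bounds k (h - 1) Hk).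
  nra.
Qed.

Section Iterates.

Variables (p eps : R) (V : value).
Hypothesis p_f_unit : 0 <= p_f p eps V <= 1.

Lemma ycas_n_bounds (n : nat) (h : R) : 0 <= ycas_n p eps V n h <= 1.
Proof.
  revert h; induction n as [|n IH]; intros h; [simpl; lra|].
  rewrite ycas_n_S. apply walk_step_bounds; auto.
Qed.

Lemma ycas_n_le_S (n : nat) (h : R) : ycas_n p eps V n h <= ycas_n p eps V (S n) h.
Proof.
  revert h; induction n as [|n IH]; intros h.
  - apply (ycas_n_bounds 1).
  - rewrite (ycas_n_S _ _ _ n), (ycas_n_S _ _ _ (S n)).
    apply walk_step_le; auto.
Qed.

Lemma ycas_n_le_supersolution (k : R -> R) :
  (forall h, -1 <= h <= 1 -> 0 <= k h) ->
  (forall h, -1 <= h <= 1 -> walk_step (p_f p eps V) (eta p eps) k h <= k h) ->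
  forall n h, -1 <= h <= 1 -> ycas_n p eps V n h <= k h.
Proof.
  intros Hk0 Hsuper n. induction n as [|n IH]; intros h Hh; [apply Hk0, Hh|].
  rewrite ycas_n_S. eapply Rle_trans; [apply walk_step_le; eauto | auto].
Qed.

End Iterates.

(* [super_top q] and [super_zero q] are the solution [y], [A] of
   [y = q + (1-q) A] and [A = q y + (1-q) q^2 y]. *)
Definition super_top (q : R) : R := q / (1 - q * (1 - q) * (1 + q - q^2)).

Definition super_zero (q : R) : R := q * (1 + q - q^2) * super_top q.

Definition ycas_supersolution (q h : R) : R :=
  if Rlt_dec 0 h then super_top q
  else if Rlt_dec h 0 then
    (if Rlt_dec (-1) h then q * super_top q else q^2 * super_top q)
  else super_zero q.

Lemma super_den_pos (q : R) : 0 <= q <= 1 -> 0 < 1 - q * (1 - q) * (1 + q - q^2).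
Proof.
  intros Hq. pose proof (pow2_ge_0 (q - 1/2)).
  assert (0 <= q * (1 - q) <= 1/4) by nra.
  assert (1 <= 1 + q - q^2 <= 5/4) by nra.
  nra.
Qed.

Lemma super_top_spec (q : R) : 0 <= q <= 1 ->
  super_top q = q + (1 - q) * super_zero q /\ 0 <= super_top q <= 1.
Proof.
  intros Hq. pose proof (super_den_pos q Hq).
  unfold super_zero, super_top.
  split; [field; lra|].
  split; [apply Rdiv_le_0_compat; lra|].
  apply Rle_div_l; [lra|].
  assert (0 <= (1 - q)^3 * (1 + q)) by (apply Rmult_le_pos; [apply pow_le|]; lra).
  replace (1 - q * (1 - q) * (1 + q - q^2)) with (q + (1 - q)^3 * (1 + q)) by ring.
  lra.
Qed.

Lemma ycas_supersolution_walk_step (q e h : R) : 0 <= q <= 1 -> 0 < e < 1 ->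
  -1 <= h <= 1 -> walk_step q e (ycas_supersolution q) h <= ycas_supersolution q h.
Proof.
  intros Hq He Hh.
  destruct (super_top_spec q Hq) as [Htop [Hy0 Hy1]].
  unfold super_zero in Htop.
  assert (Hcoef : 1 <= 1 + q - q^2 /\ q * (1 + q - q^2) <= 1).
  { split; [nra|].
    assert (0 <= (1 - q) * (1 - q) * (1 + q)) by (apply Rmult_le_pos; nra).
    nra. }
  set (y := super_top q) in *.
  assert (0 <= q * y <= q * (1 + q - q^2) * y) by (split; [|apply Rmult_le_compat_r]; nra).
  assert (q * (1 + q - q^2) * y <= y) by nra.
  unfold walk_step, exit_or, ycas_supersolution, super_zero; fold y.
  repeat destruct Rlt_dec; try lra; nra.
Qed.

Lemma ycas_supersolution_nonneg (q h : R) : 0 <= q <= 1 -> 0 <= ycas_supersolution q h.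
Proof.
  intros Hq. destruct (super_top_spec q Hq) as [_ [Hy _]].
  unfold ycas_supersolution, super_zero.
  set (y := super_top q) in *. clearbody y.
  assert (0 <= q * y) by nra.
  assert (0 <= q^2 * y) by nra.
  assert (0 <= q * (1 + q - q^2) * y) by nra.
  repeat destruct Rlt_dec; lra.
Qed.

Lemma P_Ycas_le_super_zero (p eps : R) (V : value) :
  1/2 < p < 1 -> 0 < eps < 1 -> P_Ycas p eps V <= super_zero (p_f p eps V).
Proof.
  intros Hp He.
  pose proof (p_f_bounds p eps V ltac:(lra) ltac:(lra)) as Hq.
  pose proof (eta_bounds p eps Hp He) as Heta.
  unfold P_Ycas. apply real_Lim_seq_le. intros n. split.
  - apply ycas_n_bounds; lra.
  - replace (super_zero (p_f p eps V)) with (ycas_supersolution (p_f p eps V) 0)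
      by (unfold ycas_supersolution; repeat destruct Rlt_dec; lra).
    apply ycas_n_le_supersolution; try lra.
    + intros h _. apply ycas_supersolution_nonneg; lra.
    + intros h Hh. apply ycas_supersolution_walk_step; lra.
Qed.

Lemma ycas_n_eps0_SS (p : R) (V : value) (n : nat) : 1/2 < p < 1 ->
  ycas_n p 0 V (S (S n)) 0 =
  (p_f p 0 V)^2 + 2 * p_f p 0 V * (1 - p_f p 0 V) * ycas_n p 0 V n 0.
Proof.
  intros Hp. cbn [ycas_n]. rewrite (eta_eps0 p Hp).
  unfold exit_or.
  replace (0 + 1) with 1 by ring. replace (0 - 1) with (-1) by ring.
  replace (1 + 1) with 2 by ring. replace (1 - 1) with 0 by ring.
  replace (-1 + 1) with 0 by ring. replace (-1 - 1) with (-2) by ring.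
  repeat (destruct Rlt_dec; try lra); ring.
Qed.

Lemma ycas_n_eps0_double (p : R) (V : value) (k : nat) : 1/2 < p < 1 ->
  let q := p_f p 0 V in
  ycas_n p 0 V (2 * k) 0 = q^2 / (q^2 + (1 - q)^2) * (1 - (2 * q * (1 - q))^k).
Proof.
  intros Hp q.
  pose proof (p_f_bounds p 0 V ltac:(lra) ltac:(lra)) as Hq. fold q in Hq.
  assert (0 < q^2 + (1 - q)^2) by nra.
  induction k as [|k IH]; [simpl; field; lra|].
  replace (2 * S k)%nat with (S (S (2 * k))) by lia.
  rewrite ycas_n_eps0_SS, IH by exact Hp. fold q. simpl. field. lra.
Qed.

Lemma P_Ycas_eps0 (p : R) (V : value) : 1/2 < p < 1 ->
  P_Ycas p 0 V = (p_f p 0 V)^2 / ((p_f p 0 V)^2 + (1 - p_f p 0 V)^2).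
Proof.
  intros Hp.
  pose proof (p_f_bounds p 0 V ltac:(lra) ltac:(lra)) as Hq.
  set (u := fun n => ycas_n p 0 V n 0).
  assert (Hu : ex_lim_seq u)
    by (apply ex_lim_seq_incr; intros n; apply ycas_n_le_S; lra).
  set (q := p_f p 0 V) in *.
  assert (Hsub : filterlim (fun n => (2 * n)%nat) eventually eventually)
    by (intros P [N HN]; exists N; intros n Hn; apply HN; lia).
  unfold P_Ycas. fold u.
  rewrite <- (Lim_seq_subseq u _ Hsub Hu). unfold u.
  erewrite Lim_seq_ext by (intros k; apply (ycas_n_eps0_double p V k Hp)).
  fold q.
  rewrite (is_lim_seq_unique _ (q^2 / (q^2 + (1 - q)^2) * (1 - 0))).
  - simpl. ring.
  - apply (is_lim_seq_scal_l _ _ (Finite (1 - 0))), (is_lim_seq_minus' _ _ 1 0).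
    + apply is_lim_seq_const.
    + apply is_lim_seq_geom. rewrite Rabs_right; nra.
Qed.

Lemma super_zero_lt_eps0 (q : R) : 0 < q < 1 ->
  super_zero q < q^2 / (q^2 + (1 - q)^2).
Proof.
  intros Hq. pose proof (super_den_pos q ltac:(lra)).
  assert (0 < q^2 + (1 - q)^2) by nra.
  apply Rlt_0_minus.
  replace (q^2 / (q^2 + (1 - q)^2) - super_zero q)
    with (q^2 * (q * (1 - q))^2 /
          ((q^2 + (1 - q)^2) * (1 - q * (1 - q) * (1 + q - q^2))))
    by (unfold super_zero, super_top; field; lra).
  apply Rdiv_lt_0_compat; [|nra].
  apply Rmult_lt_0_compat; apply pow_lt; nra.
Qed.

Lemma super_zero_continuous (q : R) : 0 <= q <= 1 -> continuous super_zero q.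
Proof.
  intros Hq. pose proof (super_den_pos q Hq).
  apply (@ex_derive_continuous R_AbsRing R_NormedModule).
  unfold super_zero, super_top. auto_derive. lra.
Qed.

Theorem theorem2 :
  forall (p : R) (V : value), 1/2 < p < 1 ->
  exists eps_low : R, 0 < eps_low /\
    forall eps : R, 0 < eps < eps_low -> eps < 1 ->
      P_Ycas p eps V < P_Ycas p 0 V.
Proof.
  intros p V Hp.
  pose proof (p_f_bounds p 0 V ltac:(lra) ltac:(lra)) as Hq0.
  assert (Hgap : super_zero (p_f p 0 V) < P_Ycas p 0 V)
    by (rewrite P_Ycas_eps0 by exact Hp; apply super_zero_lt_eps0, Hq0).
  destruct (continuous_lt_near _ _ _ (super_zero_continuous (p_f p 0 V) ltac:(lra)) Hgap)
    as [d [Hd Hnear]].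
  exists d. split; [exact Hd|]. intros eps He He1.
  eapply Rle_lt_trans; [apply P_Ycas_le_super_zero; lra|].
  apply Hnear.
  pose proof (Rabs_p_f_sub_eps0 p eps V ltac:(lra) ltac:(lra)). lra.
Qed.
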